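(* Let $\Gamma=(V,E)$ be a graph and for each $v\in V$ let $M_v$ be a monoid. If every $M_v$ is right cancellative (respectively left cancellative, respectively cancellative), then the graph product $\Gamma_{v\in V}M_v$ is right cancellative (respectively left cancellative, respectively cancellative).
   Context: A graph $\Gamma=(V,E)$ consists of a set $V$ of vertices and an irreflexive symmetric relation $E\subseteq V\times V$ (edges); $u,v$ are adjacent if $(u,v)\in E$. For monoids $M_v$ ($v\in V$, taken pairwise disjoint), the graph product $\Gamma_{v\in V}M_v$ is the quotient of the free product of the $M_v$ by the congruence generated by all pairs $(mn,nm)$ with $m\in M_u$, $n\in M_v$ and $(u,v)\in E$. Equivalently, if $M_v$ has presentation $\langle A_v\mid R_v\rangle$, the graph product has presentation $\langle \bigcup_v A_v \mid \bigcup_v R_v \cup \{ab=ba : a\in A_u, b\in A_v, (u,v)\in E\}\rangle$. *)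

(* Graph products of monoids, defined by the standard
   presentation: generators = all elements of all M_v (disjoint union,
   realised as a sigma type), relations = multiplication tables of the M_v,
   identification of each 1_v with the empty word, and commutation of
   elements of adjacent vertex monoids. *)
From Stdlib Require Import List.
Import ListNotations.
Set Implicit Arguments.

Record monoid := Monoid {
  mcar :> Type;
  mop : mcar -> mcar -> mcar;
  munit : mcar;
  mopA : forall a b c, mop a (mop b c) = mop (mop a b) c;
  mop1l : forall a, mop munit a = a;
  mop1r : forall a, mop a munit = a
}.
Arguments mop {m} _ _.

Definition left_cancellative (M : monoid) : Prop :=
  forall a b c : M, mop c a = mop c b -> a = b.
Definition right_cancellative (M : monoid) : Prop :=
  forall a b c : M, mop a c = mop b c -> a = b.
Definition cancellative (M : monoid) : Prop :=
  left_cancellative M /\ right_cancellative M.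

Section GraphProduct.
Variables (V : Type) (E : V -> V -> Prop) (M : V -> monoid).

Definition gp_letter := {v : V & mcar (M v)}.
Definition gp_word := list gp_letter.

Inductive gp_rel : gp_word -> gp_word -> Prop :=
| gp_rel_mul (v : V) (a b : M v) :
    gp_rel [existT _ v a; existT _ v b] [existT _ v (mop a b)]
| gp_rel_unit (v : V) :
    gp_rel [existT _ v (munit (M v))] []
| gp_rel_comm (u v : V) (m : M u) (n : M v) :
    E u v -> gp_rel [existT _ u m; existT _ v n] [existT _ v n; existT _ u m].

Inductive gp_cong : gp_word -> gp_word -> Prop :=
| gp_cong_base p s w1 w2 : gp_rel w1 w2 -> gp_cong (p ++ w1 ++ s) (p ++ w2 ++ s)
| gp_cong_refl w : gp_cong w w
| gp_cong_sym w1 w2 : gp_cong w1 w2 -> gp_cong w2 w1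
| gp_cong_trans w1 w2 w3 : gp_cong w1 w2 -> gp_cong w2 w3 -> gp_cong w1 w3.

(* The graph product is the quotient gp_word / gp_cong with multiplication
   induced by concatenation; cancellativity is stated on representatives. *)
Definition gp_left_cancellative : Prop :=
  forall x y z : gp_word, gp_cong (z ++ x) (z ++ y) -> gp_cong x y.
Definition gp_right_cancellative : Prop :=
  forall x y z : gp_word, gp_cong (x ++ z) (y ++ z) -> gp_cong x y.
Definition gp_cancellative : Prop :=
  gp_left_cancellative /\ gp_right_cancellative.

End GraphProduct.

(* A word acts on reduced words: a letter [m] of [M v] multiplies by [m] the
   [v]-letter that can be shuffled to the front, inserting one if there is
   none.  Up to shuffling, this action respects the defining relations, so two
   words are equal in the graph product iff the reduced words they produce
   from the empty word are shuffle equivalent.  When [M v] is left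
   cancellative, acting by [m] is undone by acting with left division by [m],
   which gives left cancellation one letter at a time.  Right cancellation is
   left cancellation in the graph product of the opposite monoids, transported
   along word reversal. *)

From Stdlib Require Import List Relations Setoid Morphisms ClassicalEpsilon Eqdep.
Import ListNotations.
Set Implicit Arguments.

Section NormalForms.
Variables (V : Type) (E : V -> V -> Prop) (M : V -> monoid).
Hypothesis E_irrefl : forall v, ~ E v v.
Hypothesis E_sym : forall u v, E u v -> E v u.

Notation letter := (gp_letter M).
Notation word := (gp_word M).

Lemma vertex_cases (v u : V) : u = v \/ E v u \/ (u <> v /\ ~ E v u).
Proof. destruct (classic (u = v)); [auto|]. destruct (classic (E v u)); auto. Qed.

Inductive shuffle : word -> word -> Prop :=
| shuffle_swap A x y B :
    E (projT1 x) (projT1 y) -> shuffle (A ++ x :: y :: B) (A ++ y :: x :: B).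

Definition shuffle_equiv : word -> word -> Prop := clos_refl_sym_trans word shuffle.

#[local] Instance shuffle_equiv_Equivalence : Equivalence shuffle_equiv.
Proof.
  split; [exact (rst_refl _ _) | exact (rst_sym _ _) | exact (rst_trans _ _)].
Qed.

Lemma shuffle_equiv_swap A x y B :
  E (projT1 x) (projT1 y) -> shuffle_equiv (A ++ x :: y :: B) (A ++ y :: x :: B).
Proof. intros H; apply rst_step; constructor; exact H. Qed.

#[local] Instance app_shuffle_equiv (P : word) : Proper (shuffle_equiv ==> shuffle_equiv) (app P).
Proof.
  intros w w' H; induction H as [w w' [A x y B Hxy]| | |].
  - rewrite !app_assoc; apply shuffle_equiv_swap; exact Hxy.
  - reflexivity.
  - symmetry; assumption.
  - etransitivity; eassumption.
Qed.

#[local] Instance cons_shuffle_equiv (a : letter) :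
  Proper (shuffle_equiv ==> shuffle_equiv) (cons a).
Proof. intros w w' H; exact (app_shuffle_equiv [a] H). Qed.

Lemma gp_cong_shuffle_equiv w w' : shuffle_equiv w w' -> gp_cong E w w'.
Proof.
  induction 1 as [w w' [A [u m] [v n] B Huv]| | |].
  - exact (gp_cong_base A B (gp_rel_comm E M u v m n Huv)).
  - apply gp_cong_refl.
  - apply gp_cong_sym; assumption.
  - eapply gp_cong_trans; eassumption.
Qed.

Lemma gp_cong_cons (a : letter) (w w' : word) :
  gp_cong E w w' -> gp_cong E (a :: w) (a :: w').
Proof.
  induction 1 as [p s w1 w2 H| | |].
  - exact (gp_cong_base (a :: p) s H).
  - apply gp_cong_refl.
  - apply gp_cong_sym; assumption.
  - eapply gp_cong_trans; eassumption.
Qed.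

Definition syllable (v : V) (m : M v) : word :=
  if excluded_middle_informative (m = munit (M v)) then [] else [existT _ v m].

Lemma syllable_unit v : syllable v (munit (M v)) = [].
Proof. unfold syllable; destruct excluded_middle_informative; [reflexivity | contradiction]. Qed.

Lemma syllable_nonunit v (m : M v) : m <> munit (M v) -> syllable v m = [existT _ v m].
Proof.
  intros H; unfold syllable; destruct excluded_middle_informative; [contradiction | reflexivity].
Qed.

Lemma gp_cong_syllable v (m : M v) w : gp_cong E (existT _ v m :: w) (syllable v m ++ w).
Proof.
  unfold syllable; destruct excluded_middle_informative as [->|_].
  - exact (gp_cong_base [] w (gp_rel_unit E M v)).
  - apply gp_cong_refl.
Qed.

Definition all_adjacent (v : V) : word -> Prop := Forall (fun a => E v (projT1 a)).

Lemma all_adjacent_syllable u v (m : M v) : E u v -> all_adjacent u (syllable v m).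
Proof.
  intros H; unfold syllable; destruct excluded_middle_informative; repeat constructor; exact H.
Qed.

Lemma syllable_pass v (m : M v) a w :
  E v (projT1 a) -> shuffle_equiv (a :: syllable v m ++ w) (syllable v m ++ a :: w).
Proof.
  intros H; unfold syllable; destruct excluded_middle_informative; [reflexivity|].
  apply (shuffle_equiv_swap []); auto.
Qed.

Lemma syllable_comm u v (m : M u) (n : M v) w :
  E u v -> shuffle_equiv (syllable u m ++ syllable v n ++ w) (syllable v n ++ syllable u m ++ w).
Proof.
  intros H; unfold syllable.
  do 2 destruct excluded_middle_informative; try reflexivity.
  apply (shuffle_equiv_swap []); exact H.
Qed.

(* [edit v f w] replaces the value [s] of the [v]-letter that can be shuffled
   to the front of [w] by [f s]; when there is none, [s] is taken to be [1] and
   the new letter is inserted where the search stopped. *)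
Fixpoint edit (v : V) (f : M v -> M v) (w : word) : word :=
  match w with
  | [] => syllable v (f (munit (M v)))
  | a :: w' =>
      match excluded_middle_informative (projT1 a = v) with
      | left e => syllable v (f (eq_rect _ (fun u => mcar (M u)) (projT2 a) v e)) ++ w'
      | right _ =>
          if excluded_middle_informative (E v (projT1 a)) then a :: edit v f w'
          else syllable v (f (munit (M v))) ++ w
      end
  end.

Lemma edit_head v f (m : M v) w : edit v f (existT _ v m :: w) = syllable v (f m) ++ w.
Proof.
  simpl; destruct excluded_middle_informative as [e|n]; [|contradiction].
  rewrite (UIP_refl _ _ e); reflexivity.
Qed.

Lemma edit_pass v f a w : E v (projT1 a) -> edit v f (a :: w) = a :: edit v f w.
Proof.
  intros H; simpl; destruct excluded_middle_informative as [e|_].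
  - rewrite e in H; contradiction (E_irrefl H).
  - destruct excluded_middle_informative; [reflexivity | contradiction].
Qed.

Lemma edit_block v f a w :
  projT1 a <> v -> ~ E v (projT1 a) -> edit v f (a :: w) = syllable v (f (munit (M v))) ++ a :: w.
Proof.
  intros H1 H2; simpl; destruct excluded_middle_informative; [contradiction|].
  destruct excluded_middle_informative; [contradiction | reflexivity].
Qed.

Lemma edit_ext v f g w : (forall s, f s = g s) -> edit v f w = edit v g w.
Proof.
  intros Hfg; induction w as [|a w IH]; simpl; rewrite ?Hfg; [reflexivity|].
  destruct excluded_middle_informative; [rewrite Hfg; reflexivity|].
  destruct excluded_middle_informative; rewrite ?IH, ?Hfg; reflexivity.
Qed.

Lemma edit_app_adjacent v f A w : all_adjacent v A -> edit v f (A ++ w) = A ++ edit v f w.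
Proof.
  induction 1 as [|a A Ha _ IH]; [reflexivity|].
  rewrite <- !app_comm_cons, edit_pass by exact Ha; f_equal; exact IH.
Qed.

Lemma gp_cong_edit v (c : M v) w :
  gp_cong E (existT _ v c :: w) (edit v (mop c) w).
Proof.
  induction w as [|[u m] w IH].
  - simpl; rewrite mop1r, <- (app_nil_r (syllable v c)); apply gp_cong_syllable.
  - destruct (vertex_cases v u) as [->|[Hp|[Hne Hnp]]].
    + rewrite edit_head; eapply gp_cong_trans; [|apply gp_cong_syllable].
      exact (gp_cong_base [] w (gp_rel_mul E M v c m)).
    + rewrite edit_pass by exact Hp.
      eapply gp_cong_trans; [exact (gp_cong_base [] w (gp_rel_comm E M v u c m Hp))|].
      apply gp_cong_cons; exact IH.
    + rewrite edit_block, mop1r by assumption; apply gp_cong_syllable.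
Qed.

Fixpoint blocked (v : V) (w : word) : Prop :=
  match w with
  | [] => True
  | a :: w' => projT1 a <> v /\ (E v (projT1 a) -> blocked v w')
  end.

(* The normal forms: no unit letters, and no two letters of the same vertex can
   be shuffled next to each other. *)
Fixpoint reduced (w : word) : Prop :=
  match w with
  | [] => True
  | a :: w' => projT2 a <> munit (M (projT1 a)) /\ blocked (projT1 a) w' /\ reduced w'
  end.

Lemma blocked_syllable u v (m : M v) w :
  u <> v -> E u v -> blocked u w -> blocked u (syllable v m ++ w).
Proof. intros Huv Euv Hw; unfold syllable; destruct excluded_middle_informative; simpl; auto. Qed.

Lemma blocked_edit u v f w :
  u <> v -> E u v -> blocked u w -> blocked u (edit v f w).
Proof.
  intros Huv Euv; induction w as [|[x m] w IH]; intros Hw.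
  - simpl; rewrite <- (app_nil_r (syllable v _)); apply blocked_syllable; auto.
  - destruct Hw as [Hx Hw]; simpl in Hx, Hw.
    destruct (vertex_cases v x) as [->|[Hp|[Hne Hnp]]].
    + rewrite edit_head; apply blocked_syllable; auto.
    + rewrite edit_pass by exact Hp; split; auto.
    + rewrite edit_block by assumption; apply blocked_syllable; auto; split; auto.
Qed.

Lemma reduced_syllable v (m : M v) w : blocked v w -> reduced w -> reduced (syllable v m ++ w).
Proof. intros Hb Hr; unfold syllable; destruct excluded_middle_informative; simpl; auto. Qed.

Lemma reduced_edit v f w : reduced w -> reduced (edit v f w).
Proof.
  induction w as [|[u m] w IH]; intros Hw.
  - simpl; rewrite <- (app_nil_r (syllable v _)); apply reduced_syllable; exact I.
  - destruct Hw as [Hm [Hb Hw]]; simpl in Hm, Hb.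
    destruct (vertex_cases v u) as [->|[Hp|[Hne Hnp]]].
    + rewrite edit_head; apply reduced_syllable; assumption.
    + rewrite edit_pass by exact Hp; repeat split; auto.
      apply blocked_edit; auto; simpl; intros ->; exact (E_irrefl Hp).
    + rewrite edit_block by assumption; apply reduced_syllable.
      * split; [assumption | contradiction].
      * repeat split; assumption.
Qed.

Lemma edit_blocked v f w :
  blocked v w -> shuffle_equiv (edit v f w) (syllable v (f (munit (M v))) ++ w).
Proof.
  induction w as [|[u m] w IH]; intros Hb.
  - simpl; rewrite app_nil_r; reflexivity.
  - destruct Hb as [Hne Hw]; simpl in Hne, Hw.
    destruct (classic (E v u)) as [Hp|Hnp].
    + rewrite edit_pass by exact Hp; rewrite IH by auto; apply syllable_pass; exact Hp.
    + rewrite edit_block by assumption; reflexivity.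
Qed.

Lemma edit_syllable v f (m : M v) w :
  blocked v w -> shuffle_equiv (edit v f (syllable v m ++ w)) (syllable v (f m) ++ w).
Proof.
  intros Hw; destruct (classic (m = munit (M v))) as [->|Hm].
  - rewrite syllable_unit; apply edit_blocked; exact Hw.
  - rewrite syllable_nonunit by exact Hm; simpl app; rewrite edit_head; reflexivity.
Qed.

Lemma edit_comp v f g w :
  reduced w -> shuffle_equiv (edit v f (edit v g w)) (edit v (fun s => f (g s)) w).
Proof.
  induction w as [|[u m] w IH]; intros Hw.
  - pose proof (@edit_syllable v f (g (munit (M v))) [] I) as H.
    rewrite !app_nil_r in H; exact H.
  - destruct Hw as [_ [Hb Hw]]; simpl in Hb.
    destruct (vertex_cases v u) as [->|[Hp|[Hne Hnp]]].
    + rewrite !edit_head; apply edit_syllable; exact Hb.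
    + rewrite !edit_pass by exact Hp; rewrite IH by exact Hw; reflexivity.
    + rewrite !edit_block by assumption; apply edit_syllable.
      split; [assumption | contradiction].
Qed.

Lemma edit_id v f w : (forall s, f s = s) -> reduced w -> edit v f w = w.
Proof.
  intros Hf; induction w as [|[u m] w IH]; intros Hw.
  - simpl; rewrite Hf; apply syllable_unit.
  - destruct Hw as [Hm [_ Hw]]; simpl in Hm.
    destruct (vertex_cases v u) as [->|[Hp|[Hne Hnp]]].
    + rewrite edit_head, Hf, syllable_nonunit by exact Hm; reflexivity.
    + rewrite edit_pass, IH by assumption; reflexivity.
    + rewrite edit_block, Hf, syllable_unit by assumption; reflexivity.
Qed.

Lemma edit_swap_front_oriented v f x y B :
  E (projT1 x) (projT1 y) -> projT1 x = v \/ (E v (projT1 x) /\ projT1 y <> v) ->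
  shuffle_equiv (edit v f (x :: y :: B)) (edit v f (y :: x :: B)).
Proof.
  destruct x as [u m], y as [w n]; cbn [projT1]; intros Huw [->|[Hp Hw]].
  - rewrite edit_head, edit_pass, edit_head by exact Huw.
    symmetry; apply syllable_pass; exact Huw.
  - rewrite edit_pass by exact Hp.
    destruct (classic (E v w)) as [Hpw|Hnp].
    + rewrite !edit_pass by assumption; apply (shuffle_equiv_swap []); exact Huw.
    + rewrite !edit_block by (simpl; auto).
      rewrite syllable_pass by exact Hp; apply shuffle_equiv_swap; exact Huw.
Qed.

Lemma edit_swap_front v f x y B :
  E (projT1 x) (projT1 y) -> shuffle_equiv (edit v f (x :: y :: B)) (edit v f (y :: x :: B)).
Proof.
  intros Hxy; destruct (vertex_cases v (projT1 x)) as [Hx|[Hx|[Hx Hnx]]].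
  - apply edit_swap_front_oriented; auto.
  - destruct (classic (projT1 y = v)) as [Hy|Hy].
    + symmetry; apply edit_swap_front_oriented; auto.
    + apply edit_swap_front_oriented; auto.
  - assert (Hy : projT1 y <> v) by (intros Hy; rewrite Hy in Hxy; auto).
    destruct (classic (E v (projT1 y))) as [Hpy|Hny].
    + symmetry; apply edit_swap_front_oriented; auto.
    + rewrite !edit_block by assumption; apply shuffle_equiv_swap; exact Hxy.
Qed.

Lemma edit_resp v f w w' : shuffle_equiv w w' -> shuffle_equiv (edit v f w) (edit v f w').
Proof.
  induction 1 as [w w' [A x y B Hxy]| | |].
  - induction A as [|[u m] A IH]; [apply edit_swap_front; exact Hxy|].
    destruct (vertex_cases v u) as [->|[Hp|[Hne Hnp]]]; simpl app.
    + rewrite !edit_head; apply app_shuffle_equiv, shuffle_equiv_swap; exact Hxy.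
    + rewrite !edit_pass by exact Hp; rewrite IH; reflexivity.
    + rewrite !edit_block by assumption.
      apply app_shuffle_equiv, cons_shuffle_equiv, shuffle_equiv_swap; exact Hxy.
  - reflexivity.
  - symmetry; assumption.
  - etransitivity; eassumption.
Qed.

Lemma edit_comm u v f g w : u <> v -> E u v ->
  shuffle_equiv (edit u f (edit v g w)) (edit v g (edit u f w)).
Proof.
  intros Huv Euv; assert (Evu : E v u) by auto.
  assert (Pu : forall n, all_adjacent u (syllable v n)) by (intros; now apply all_adjacent_syllable).
  assert (Pv : forall m, all_adjacent v (syllable u m)) by (intros; now apply all_adjacent_syllable).
  induction w as [|[x m] w IH].
  - simpl; rewrite <- (app_nil_r (syllable v _)), <- (app_nil_r (syllable u _)).
    rewrite !edit_app_adjacent by auto; cbn [edit].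
    pose proof (syllable_comm (g (munit (M v))) (f (munit (M u))) [] Evu) as H.
    rewrite !app_nil_r in H; exact H.
  - destruct (vertex_cases u x) as [->|[Hux|[Hux Hnux]]];
      [|destruct (vertex_cases v x) as [->|[Hvx|[Hvx Hnvx]]]..].
    + rewrite (@edit_pass v g), !edit_head, edit_app_adjacent by auto; reflexivity.
    + rewrite (@edit_pass u f), !edit_head, edit_app_adjacent by auto; reflexivity.
    + rewrite (@edit_pass v g), (@edit_pass u f), (@edit_pass u f), (@edit_pass v g)
        by assumption.
      rewrite IH; reflexivity.
    + rewrite (@edit_block v g), (@edit_pass u f), edit_app_adjacent, (@edit_pass u f),
        (@edit_block v g) by auto.
      reflexivity.
    + contradiction.
    + rewrite (@edit_pass v g), (@edit_block u f), (@edit_block u f), edit_app_adjacent,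
        (@edit_pass v g) by auto.
      reflexivity.
    + rewrite (@edit_block v g), (@edit_block u f), !edit_app_adjacent,
        (@edit_block v g), (@edit_block u f) by auto.
      apply syllable_comm; exact Evu.
Qed.

Definition act (a : letter) : word -> word := edit (projT1 a) (mop (projT2 a)).

Definition act_word (w r : word) : word := fold_right act r w.

Definition nf (w : word) : word := act_word w [].

Lemma reduced_act_word w r : reduced r -> reduced (act_word w r).
Proof. intros Hr; induction w as [|a w IH]; [exact Hr | apply reduced_edit; exact IH]. Qed.

Lemma act_word_resp w r r' : shuffle_equiv r r' -> shuffle_equiv (act_word w r) (act_word w r').
Proof. intros H; induction w as [|a w IH]; [exact H | apply edit_resp; exact IH]. Qed.

Lemma act_word_rel (w1 w2 r : word) :
  gp_rel E w1 w2 -> reduced r -> shuffle_equiv (act_word w1 r) (act_word w2 r).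
Proof.
  intros Hrel Hr; destruct Hrel as [v a b|v|u v m n Huv];
    cbn [act_word fold_right]; unfold act; cbn [projT1 projT2].
  - rewrite edit_comp by exact Hr.
    rewrite (@edit_ext v _ (mop (mop a b)) r (fun s => mopA _ a b s)); reflexivity.
  - rewrite edit_id; [reflexivity | apply mop1l | exact Hr].
  - apply edit_comm; [intros ->; exact (E_irrefl Huv) | exact Huv].
Qed.

Lemma act_word_cong w1 w2 r :
  gp_cong E w1 w2 -> reduced r -> shuffle_equiv (act_word w1 r) (act_word w2 r).
Proof.
  intros H; revert r; induction H as [p s w1 w2 Hrel| | |]; intros r Hr.
  - unfold act_word; rewrite !fold_right_app.
    apply act_word_resp, act_word_rel; [exact Hrel|].
    apply reduced_act_word; exact Hr.
  - reflexivity.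
  - symmetry; auto.
  - etransitivity; eauto.
Qed.

Lemma gp_cong_nf w : gp_cong E w (nf w).
Proof.
  induction w as [|[v c] w IH]; [apply gp_cong_refl|].
  eapply gp_cong_trans; [apply gp_cong_cons; exact IH | apply gp_cong_edit].
Qed.

Lemma gp_cong_iff_nf w1 w2 : gp_cong E w1 w2 <-> shuffle_equiv (nf w1) (nf w2).
Proof.
  split; intros H.
  - apply act_word_cong; [exact H | exact I].
  - eapply gp_cong_trans; [apply gp_cong_nf|].
    eapply gp_cong_trans; [apply gp_cong_shuffle_equiv; exact H | apply gp_cong_sym, gp_cong_nf].
Qed.

(* Arbitrary when [s] is not a left multiple of [c]. *)
Definition ldiv {N : monoid} (c s : N) : N := epsilon (inhabits s) (fun d => mop c d = s).

Lemma ldiv_mul (N : monoid) (c s : N) : left_cancellative N -> ldiv c (mop c s) = s.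
Proof.
  intros LC; apply (LC _ _ c); unfold ldiv.
  apply (epsilon_spec _ (fun d => mop c d = mop c s)); exists s; reflexivity.
Qed.

Lemma gp_left_cancel : (forall v, left_cancellative (M v)) -> gp_left_cancellative E M.
Proof.
  intros LC x y z; induction z as [|[v c] z IH]; [trivial|].
  intros Hz; apply IH; rewrite gp_cong_iff_nf in Hz |- *.
  assert (Hinv : forall r, reduced r -> shuffle_equiv (edit v (ldiv c) (act (existT _ v c) r)) r).
  { intros r Hr; unfold act; cbn [projT1 projT2]; rewrite edit_comp by exact Hr.
    rewrite edit_id by (try exact Hr; intros s; apply ldiv_mul, LC); reflexivity. }
  rewrite <- (Hinv (nf (z ++ x))), <- (Hinv (nf (z ++ y))) by apply reduced_act_word, I.
  apply edit_resp; exact Hz.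
Qed.

End NormalForms.

Definition opposite (N : monoid) : monoid :=
  @Monoid N (fun a b => mop b a) (munit N)
    (fun a b c => eq_sym (mopA N c b a)) (mop1r N) (mop1l N).

Definition gp_word_map {V : Type} {M N : V -> monoid} (t : forall v, M v -> N v)
  (w : gp_word M) : gp_word N :=
  map (fun a => existT _ (projT1 a) (t _ (projT2 a))) w.

Lemma gp_cong_rev_map (V : Type) (E : V -> V -> Prop) (E_sym : forall u v, E u v -> E v u)
  (M N : V -> monoid) (t : forall v, M v -> N v)
  (t_mul : forall v (a b : M v), t v (mop a b) = mop (t v b) (t v a))
  (t_unit : forall v, t v (munit (M v)) = munit (N v)) (w1 w2 : gp_word M) :
  gp_cong E w1 w2 -> gp_cong E (rev (gp_word_map t w1)) (rev (gp_word_map t w2)).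
Proof.
  induction 1 as [p s w1 w2 Hrel| | |].
  - unfold gp_word_map; rewrite !map_app, !rev_app_distr, <- !app_assoc.
    apply gp_cong_base; destruct Hrel as [v a b|v|u v m n Huv]; cbn.
    + rewrite t_mul; apply gp_rel_mul.
    + rewrite t_unit; apply gp_rel_unit.
    + apply gp_rel_comm, E_sym; exact Huv.
  - apply gp_cong_refl.
  - apply gp_cong_sym; assumption.
  - eapply gp_cong_trans; eassumption.
Qed.

Lemma gp_right_cancel (V : Type) (E : V -> V -> Prop)
  (E_irrefl : forall v, ~ E v v) (E_sym : forall u v, E u v -> E v u) (M : V -> monoid) :
  (forall v, right_cancellative (M v)) -> gp_right_cancellative E M.
Proof.
  intros RC x y z H.
  pose (Mop := fun v => opposite (M v)).
  apply (gp_cong_rev_map E_sym Mop (fun v (m : M v) => m : Mop v)) in H; [|reflexivity..].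
  unfold gp_word_map in H; rewrite !map_app, !rev_app_distr in H.
  apply (gp_left_cancel (M := Mop) E_irrefl E_sym RC) in H.
  apply (gp_cong_rev_map E_sym M (fun v (m : Mop v) => m : M v)) in H; [|reflexivity..].
  unfold gp_word_map in H; rewrite !map_rev, !rev_involutive in H.
  assert (Hid : forall w : gp_word M,
    map (fun a : gp_letter Mop => existT (fun v => mcar (M v)) (projT1 a) (projT2 a))
      (map (fun a : gp_letter M => existT (fun v => mcar (Mop v)) (projT1 a) (projT2 a)) w) = w).
  { intros w; rewrite map_map, <- map_id; apply map_ext; intros [v m]; reflexivity. }
  rewrite !Hid in H.
  exact H.
Qed.

Theorem theorem1p5 (V : Type) (E : V -> V -> Prop)
  (E_irrefl : forall v, ~ E v v) (E_sym : forall u v, E u v -> E v u)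
  (M : V -> monoid) :
  ((forall v, right_cancellative (M v)) -> gp_right_cancellative E M) /\
  ((forall v, left_cancellative (M v)) -> gp_left_cancellative E M) /\
  ((forall v, cancellative (M v)) -> gp_cancellative E M).
Proof.
  pose proof (gp_right_cancel E_irrefl E_sym (M := M)) as R.
  pose proof (gp_left_cancel E_irrefl E_sym (M := M)) as L.
  split; [exact R | split; [exact L |]].
  intros C; split; [apply L | apply R]; intros v; apply C.
Qed.
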